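(* (a) Let $\Gamma$ be a perfect matching drawing containing vertices $x,p,q,y$ with matching edges $xp$ and $qy$, where $p$ and $q$ are joined by exactly two non-matching edges which together bound a disk whose interior meets no other part of $\Gamma$, all of this lying in a disk $D$ that meets $\Gamma$ only in these vertices and edges and initial segments of the two other edges at $x$ and of the two other edges at $y$. Let $\Gamma'$ be obtained by replacing, inside $D$, the vertices $p,q$, the two edges between them and the matching edges $xp,qy$ by a single matching edge $xy$. Then $$\langle\Gamma\rangle_2(1)=2\,\langle\Gamma'\rangle_2(1).$$ (b) If $G$ is a planar trivalent graph with perfect matching $M$ containing such a configuration in a plane embedding, and $(G',M')$ is obtained by the same replacement, then $|G:M|_2=2\,|G':M'|_2$.
   Context: Graphs are finite and may have multiple edges; trivalent means every vertex has degree $3$. $|G:M|_2$ denotes the number of $2$-factors (spanning subgraphs in which every vertex has degree $2$) of $G$ that contain every edge of $M$. A perfect matching drawing $\Gamma$ is a collection of trivalent vertices, edges and vertex-free closed curves drawn in the $2$-sphere by a generic immersion (transverse double points away from vertices, carrying no extra data), together with a set $M$ of edges forming a perfect matching of the vertices. For a matching edge $e=uv$ with other edge-ends $\alpha,\beta$ at $u$ and $\gamma,\delta$ at $v$ in cyclic order $\alpha,\beta,\delta,\gamma$ around a small disk about $e$, the $0$-resolution deletes $e,u,v$ and joins $\alpha$–$\gamma$ and $\beta$–$\delta$ by disjoint arcs, and the $1$-resolution joins $\alpha$–$\delta$ and $\beta$–$\gamma$ by two arcs crossing once. For a state $s:M\to\{0,1\}$, resolving every matching edge gives $c(s)$ immersed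 closed curves, and the $2$-factor bracket is $\langle\Gamma\rangle_2(z)=\sum_s(-z)^{|s|}(z+z^{-1})^{c(s)}\in\mathbb{Z}[z,z^{-1}]$, $|s|$ being the number of edges assigned $1$. *)

From mathcomp Require Import all_boot all_order all_algebra.
Set Implicit Arguments. Unset Strict Implicit. Unset Printing Implicit Defensive.
Import Order.TTheory GRing.Theory Num.Theory.

(* A perfect matching drawing, recorded by the data that the 2-factor bracket
   depends on: a trivalent multigraph given by darts (half-edges), the cyclic
   order (rotation, counterclockwise w.r.t. a fixed orientation of the sphere)
   of the three edge-ends at each vertex, the matching M, and the number of
   vertex-free closed curves.  Crossings carry no data and are omitted. *)
Record pmd (H V : finType) := Pmd {
  darts : {set H};
  opp : H -> H;
  rot : H -> H;
  vtx : H -> V;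
  matched : pred H;
  loops : nat
}.

Definition pmd_wf (H V : finType) (G : pmd H V) : Prop :=
  forall h, h \in darts G ->
    [/\ opp G h \in darts G, opp G (opp G h) = h & opp G h != h] /\
    [/\ rot G h \in darts G, vtx G (rot G h) = vtx G h, rot G h != h,
        rot G (rot G (rot G h)) = h &
        (forall h', h' \in darts G -> vtx G h' = vtx G h ->
            h' \in [:: h; rot G h; rot G (rot G h)])] /\
    (matched G (opp G h) = matched G h /\
     count (matched G) [:: h; rot G h; rot G (rot G h)] = 1%N).

(* States: sets of matched darts closed under opp (= sets of matching edges
   assigned 1). *)
Definition states (H V : finType) (G : pmd H V) : {set {set H}} :=
  [set S : {set H} | (S \subset [set h in darts G | matched G h])
                     && [forall h in S, opp G h \in S]].

(* Resolution of the matching edge at the vertex of a non-matched dart h.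
   With m the matched dart at that vertex, the disk ends are
   alpha = rot m, beta = rot^2 m, delta = rot (opp m), gamma = rot^2 (opp m).
   0-resolution: alpha-gamma, beta-delta; 1-resolution: alpha-delta, beta-gamma. *)
Definition link (H V : finType) (G : pmd H V) (S : {set H}) (h : H) : H :=
  if matched G (rot G h) then
    let m := rot G h in (* h = beta *)
    if m \in S then rot G (rot G (opp G m)) else rot G (opp G m)
  else
    let m := rot G (rot G h) in (* h = alpha *)
    if m \in S then rot G (opp G m) else rot G (rot G (opp G m)).

Definition nmdarts (H V : finType) (G : pmd H V) : {set H} :=
  [set h in darts G | ~~ matched G h].

Definition curve_rel (H V : finType) (G : pmd H V) (S : {set H}) : rel H :=
  fun a b => [&& a \in nmdarts G, b \in nmdarts G &
     [|| b == opp G a, a == opp G b, b == link G S a | a == link G S b]].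

(* c(s): number of immersed closed curves after resolving every matching edge *)
Definition ncurves (H V : finType) (G : pmd H V) (S : {set H}) : nat :=
  (loops G + n_comp (curve_rel G S) (mem (nmdarts G)))%N.

Local Open Scope ring_scope.
Definition bracket2 (R : fieldType) (H V : finType) (G : pmd H V) (z : R) : R :=
  \sum_(S in states G) (- z) ^+ (#|S| %/ 2) * (z + z^-1) ^+ ncurves G S.
Local Close Scope ring_scope.

Definition twofactors (H V : finType) (G : pmd H V) : {set {set H}} :=
  [set F : {set H} | [&& F \subset darts G, [forall h in F, opp G h \in F],
     [forall h in darts G, matched G h ==> (h \in F)] &
     [forall h in darts G, #|[set h' in F | vtx G h' == vtx G h]| == 2]]].

Definition n2f (H V : finType) (G : pmd H V) : nat := #|twofactors G|.

(* Plane embedding: the rotation system has genus 0, i.e. Euler's formula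
   V - E + F = 2 * (#components) holds, faces being orbits of rot \o opp. *)
Definition face_rel (H V : finType) (G : pmd H V) : rel H :=
  fun a b => [&& a \in darts G, b \in darts G &
                 (b == rot G (opp G a)) || (a == rot G (opp G b))].
Definition comp_rel (H V : finType) (G : pmd H V) : rel H :=
  fun a b => [&& a \in darts G, b \in darts G &
                 (b == opp G a) || (vtx G a == vtx G b)].
Definition plane (H V : finType) (G : pmd H V) : Prop :=
  (#|vtx G @: darts G| + n_comp (face_rel G) (mem (darts G)) =
   #|darts G| %/ 2 + 2 * n_comp (comp_rel G) (mem (darts G)))%N.

(* The configuration: hx is the matched dart at x of the matching edge xp,
   hq the matched dart at q of the matching edge qy; x,p,q,y distinct; the two
   non-matching edges at p go to q and bound an empty disk (planar bigon:
   upper end at p joined to upper end at q, lower to lower). *)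
Definition bigon_config (H V : finType) (G : pmd H V) (hx hq : H) : Prop :=
  let hp := opp G hx in let hy := opp G hq in
  [/\ hx \in darts G, hq \in darts G, matched G hx & matched G hq] /\
  [/\ uniq [:: vtx G hx; vtx G hp; vtx G hq; vtx G hy],
      opp G (rot G (rot G hp)) = rot G hq
    & opp G (rot G hp) = rot G (rot G hq)].

(* Gamma': delete p, q, the bigon and xp, qy, and add the matching edge xy. *)
Definition replace_bigon (H V : finType) (G : pmd H V) (hx hq : H) : pmd H V :=
  let hp := opp G hx in let hy := opp G hq in
  Pmd (darts G :\: [set hp; rot G hp; rot G (rot G hp);
                        hq; rot G hq; rot G (rot G hq)])
      (fun h => if h == hx then hy else if h == hy then hx else opp G h)
      (rot G) (vtx G) (matched G) (loops G).

(* Let a state give bits s and t to the matching edges xp and qy. Resolving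
   both, the two strands of the bigon join the two ends at x to the two ends at
   y, pairing them exactly as the single edge xy of Gamma' does when resolved
   with bit s xor t, and no closed curve is created inside the disk. So
   (s, t) |-> s xor t is a two-to-one map from the states of Gamma onto those of
   Gamma' that preserves the number of curves (compared by retracting each end
   at p or q onto the end at x or y it is linked to), and at z = 1 also the
   sign, as s + t and s xor t have the same parity. Likewise a 2-factor
   containing M passes through p and q along xp, qy and one of the two bigon
   edges, and forgetting that choice is two-to-one onto the 2-factors of G'
   containing M'. *)

From mathcomp Require Import all_boot all_order all_algebra.
(* Imported last, so that [rot] is the rotation of a drawing and not [seq.rot]. *)
Import GRing.Theory.
Set Implicit Arguments. Unset Strict Implicit. Unset Printing Implicit Defensive.

Lemma n_comp_retract (T : finType) (e e' : rel T) (a a' : {pred T}) (pi : T -> T) :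
  connect_sym e -> connect_sym e' -> closed e a -> closed e' a' ->
  {subset a' <= a} -> (forall u v, e' u v -> connect e u v) ->
  (forall u v, e u v -> connect e' (pi u) (pi v)) ->
  {in a', forall u, pi u = u} -> {in a, forall u, pi u \in a' /\ connect e u (pi u)} ->
  n_comp e a = n_comp e' a'.
Proof.
move=> sym_e sym_e' cl_a cl_a' sub_a back pi_step pi_id pi_a.
have pi_connect u v : connect e u v -> connect e' (pi u) (pi v).
  case/connectP=> p + ->; elim: p u => //= w p IHp u /andP[euw /IHp].
  exact: connect_trans (pi_step _ _ euw).
have connectE u v : u \in a' -> v \in a' -> connect e u v = connect e' u v.
  move=> ua vb; apply/idP/idP; last exact: (connect_sub back).
  by move/pi_connect; rewrite !pi_id.
rewrite /n_comp_mem.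
have inj : {in predI (roots e') (mem a') &, injective (fingraph.root e)}.
  move=> u v /andP[ru ua] /andP[rv va] /(fingraph.rootP sym_e).
  by rewrite connectE // => /(fingraph.rootP sym_e'); rewrite (eqP ru) (eqP rv).
rewrite -(card_in_imset inj); apply: eq_card => r; rewrite !inE.
apply/andP/imsetP => [[rr ra]|[u /andP[ru ua] ->]]; last first.
  by rewrite roots_root // -(closed_connect cl_a (connect_root e u)) sub_a.
have [pra epr] := pi_a r ra; set z := fingraph.root e' (pi r).
have za : z \in a' by rewrite -(closed_connect cl_a' (connect_root e' (pi r))).
exists z; first by rewrite inE /= roots_root.
apply/esym; rewrite -(eqP rr); apply/(fingraph.rootP sym_e); rewrite sym_e.
by apply: connect_trans epr _; rewrite connectE // connect_root.
Qed.

Lemma big_bool_fibers (R : Type) (idx : R) (op : Monoid.com_law idx)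
    (T U : finType) (A : {pred T}) (B : {pred U})
    (f : T -> U) (c : T -> bool) (g : bool -> U -> T) (F : T -> R) :
  {in A, forall a, f a \in B /\ g (c a) (f a) = a} ->
  {in B, forall b k, [/\ g k b \in A, f (g k b) = b & c (g k b) = k]} ->
  \big[op/idx]_(a in A) F a = \big[op/idx]_(b in B) op (F (g true b)) (F (g false b)).
Proof.
move=> fA gB; rewrite (partition_big f (mem B)) /=; last by move=> a /fA[].
apply: eq_bigr => b bB; have [gtA ft ct] := gB b bB true.
have [gfA ff cf] := gB b bB false.
rewrite (bigD1 (g true b)) /=; last by rewrite gtA ft eqxx.
congr (op _ _); apply: big_pred1 => a /=.
apply/andP/eqP => [[/andP[aA /eqP fab] ne]|->]; last first.
  by rewrite gfA ff eqxx; split=> //; apply/eqP => E; move: ct; rewrite -E cf.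
have [_ ga] := fA a aA; rewrite -ga fab in ne *.
by case: (c a) ne; rewrite ?eqxx.
Qed.

Lemma card_setI_seq (T : finType) (A : {set T}) (s : seq T) :
  uniq s -> #|A :&: [set x in s]| = count (mem A) s.
Proof.
move=> us; rewrite -size_filter -(card_uniqP (filter_uniq _ us)) -cardsE.
by apply: eq_card => x; rewrite !inE mem_filter andbC.
Qed.

Section Drawings.
Variables (H V : finType).

Lemma link_rot (G : pmd H V) (S : {set H}) m :
  ~~ matched G (rot G (rot G m)) -> rot G (rot G (rot G m)) = m ->
  link G S (rot G m) = if m \in S then rot G (opp G m) else rot G (rot G (opp G m)).
Proof. by move=> nm r3; rewrite /link (negbTE nm) r3. Qed.

Lemma link_rot2 (G : pmd H V) (S : {set H}) m :
  matched G m -> rot G (rot G (rot G m)) = m ->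
  link G S (rot G (rot G m)) = if m \in S then rot G (rot G (opp G m)) else rot G (opp G m).
Proof. by move=> mm r3; rewrite /link r3 mm. Qed.

Lemma curve_sym (G : pmd H V) (S : {set H}) : symmetric (curve_rel G S).
Proof. by move=> u v; apply/and3P/and3P => -[-> -> /or4P[]->]; rewrite ?orbT. Qed.

Lemma nmdartsP (G : pmd H V) d :
  reflect (d \in darts G /\ ~~ matched G d) (d \in nmdarts G).
Proof. by rewrite inE; apply: andP. Qed.

Lemma statesP (G : pmd H V) (S : {set H}) :
  reflect ({in S, forall h, (h \in darts G) && matched G h} /\
           {in S, forall h, opp G h \in S}) (S \in states G).
Proof.
rewrite inE; apply: (iffP andP) => [[/subsetP sub /forall_inP cl]|[sub cl]].
  by split=> // h /sub; rewrite inE.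
by split; [apply/subsetP => h /sub; rewrite inE | apply/forall_inP].
Qed.

Lemma twofactorsP (G : pmd H V) (F : {set H}) :
  reflect [/\ {subset F <= darts G}, {in F, forall h, opp G h \in F},
              {in darts G, forall h, matched G h -> h \in F} &
              {in darts G, forall h, #|[set h' in F | vtx G h' == vtx G h]| = 2}]
          (F \in twofactors G).
Proof.
rewrite inE; apply: (iffP and4P).
  case=> /subsetP sub /forall_inP cl /forall_inP mF /forall_inP deg.
  by split=> // h hd; [apply: (implyP (mF h hd)) | apply/eqP/deg].
case=> sub cl mF deg; split; first exact/subsetP.
- exact/forall_inP.
- by apply/forall_inP => h hd; apply/implyP/mF.
- by apply/forall_inP => h hd; rewrite deg.
Qed.

Section Wellformed.
Variable G : pmd H V.
Hypothesis wf : pmd_wf G.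

Lemma opp_in h : h \in darts G -> opp G h \in darts G.
Proof. by case/wf => -[]. Qed.

Lemma oppK h : h \in darts G -> opp G (opp G h) = h.
Proof. by case/wf => -[]. Qed.

Lemma matched_opp h : h \in darts G -> matched G (opp G h) = matched G h.
Proof. by case/wf => _ [_ []]. Qed.

Lemma rot_in h : h \in darts G -> rot G h \in darts G.
Proof. by case/wf => _ [[]]. Qed.

#[local] Hint Extern 0 (is_true (rot _ _ \in _)) => solve [do ?apply: rot_in; trivial] : core.

Lemma vtx_rot h : h \in darts G -> vtx G (rot G h) = vtx G h.
Proof. by case/wf => _ [[]]. Qed.

Lemma rot3 h : h \in darts G -> rot G (rot G (rot G h)) = h.
Proof. by case/wf => _ [[]]. Qed.

Lemma rot_neq h : h \in darts G -> rot G h != h.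
Proof. by case/wf => _ [[]]. Qed.

Lemma rot2_neq h : h \in darts G -> rot G (rot G h) != h.
Proof.
by move=> hd; apply: contra_neq (rot_neq hd) => E; rewrite -{2}(rot3 hd) E.
Qed.

Lemma vtx_eqE h d : h \in darts G -> d \in darts G ->
  (vtx G d == vtx G h) = [|| d == h, d == rot G h | d == rot G (rot G h)].
Proof.
move=> hd dd; apply/eqP/or3P => [ev|[]/eqP->]; rewrite ?vtx_rot ?rot_in //.
case: (wf hd) => _ [[_ _ _ _ /(_ d dd ev)]].
by rewrite !inE => /or3P[]; [constructor 1 | constructor 2 | constructor 3].
Qed.

Lemma opp_eq h d : h \in darts G -> d \in darts G -> (opp G h == d) = (h == opp G d).
Proof. by move=> hd dd; apply/eqP/eqP => [<-|->]; rewrite oppK. Qed.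

Lemma matched_rot h : h \in darts G -> matched G h ->
  ~~ matched G (rot G h) /\ ~~ matched G (rot G (rot G h)).
Proof.
case/wf => _ [_ [_]]; rewrite /= => + mh; rewrite mh.
by case: (matched G (rot G h)); case: (matched G (rot G (rot G h))).
Qed.

Lemma matched_unique h h' : h \in darts G -> h' \in darts G ->
  matched G h -> matched G h' -> vtx G h' = vtx G h -> h' = h.
Proof.
move=> hd h'd mh mh' /eqP; rewrite vtx_eqE // => /or3P[/eqP //|/eqP E|/eqP E];
  have [n1 n2] := matched_rot hd mh; by rewrite -E mh' in n1 n2.
Qed.

Lemma unmatched_at_vertex m u : m \in darts G -> u \in darts G ->
  matched G m -> ~~ matched G u -> vtx G u = vtx G m ->
  u = rot G m \/ u = rot G (rot G m).
Proof.
move=> md ud mm nu /eqP; rewrite vtx_eqE // => /or3P[/eqP E|/eqP|/eqP]; [|by left|by right].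
by rewrite E mm in nu.
Qed.

Lemma unmatched_rot u : u \in darts G -> ~~ matched G u ->
  exists m, [/\ m \in darts G, matched G m & u = rot G m \/ u = rot G (rot G m)].
Proof.
move=> ud nu; case/wf: (ud) => _ [_ [_]]; rewrite /= (negbTE nu).
case mr: (matched G (rot G u)) => /=.
  by exists (rot G u); split=> //; right; rewrite rot3.
case mr2: (matched G (rot G (rot G u))) => // _.
by exists (rot G (rot G u)); split=> //; left; rewrite rot3.
Qed.

Lemma matched_count h : h \in darts G ->
  (matched G h + matched G (rot G h) + matched G (rot G (rot G h)) = 1)%N.
Proof. by case/wf => _ [_ [_]]; rewrite /= addn0 addnA. Qed.

Lemma dart_eqE d d' : d \in darts G -> d' \in darts G ->
  (d == d') = [&& vtx G d == vtx G d', matched G d == matched G d'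
                & matched G (rot G d) == matched G (rot G d')].
Proof.
move=> dd d'd; apply/eqP/and3P => [->|[ev /eqP m0 /eqP m1]]; first by rewrite !eqxx.
move: ev; rewrite eq_sym vtx_eqE // => /or3P[/eqP // | /eqP E | /eqP E];
  have := matched_count dd; rewrite E ?rot3 // in m0 m1.
  by rewrite -m1 -m0; case: (matched G d) => // /eqP.
by rewrite -m0 -m1; case: (matched G (rot G d)) => // /eqP.
Qed.

Lemma card_at_vertex (X : {set H}) h : {subset X <= darts G} -> h \in darts G ->
  #|[set h' in X | vtx G h' == vtx G h]| = count (mem X) [:: h; rot G h; rot G (rot G h)].
Proof.
move=> sX hd; rewrite -card_setI_seq; last first.
  by rewrite /= !inE negb_or ![h == _]eq_sym rot_neq ?rot2_neq // eq_sym rot_neq.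
by apply: eq_card => d; rewrite !inE; case dX: (d \in X) => //=; rewrite vtx_eqE ?(sX d).
Qed.

Lemma state_opp S d : S \in states G -> d \in darts G -> (opp G d \in S) = (d \in S).
Proof. by case/statesP => _ cl dd; apply/idP/idP => /cl //; rewrite oppK. Qed.

Lemma opp_nmdarts u : u \in nmdarts G -> opp G u \in nmdarts G.
Proof. by case/nmdartsP=> ud nu; apply/nmdartsP; rewrite opp_in ?matched_opp. Qed.

Lemma link_next S m : m \in darts G -> matched G m ->
  link G S (rot G m) = if m \in S then rot G (opp G m) else rot G (rot G (opp G m)).
Proof. by move=> md mm; rewrite link_rot ?rot3 //; case: (matched_rot md mm). Qed.

Lemma link_prev S m : m \in darts G -> matched G m ->
  link G S (rot G (rot G m)) = if m \in S then rot G (rot G (opp G m)) else rot G (opp G m).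
Proof. by move=> md mm; rewrite link_rot2 ?rot3. Qed.

Lemma link_at S m u : m \in darts G -> matched G m -> u \in nmdarts G ->
  vtx G u = vtx G m -> link G S u \in nmdarts G /\ vtx G (link G S u) = vtx G (opp G m).
Proof.
move=> md mm /nmdartsP[ud nu] /(unmatched_at_vertex md ud mm nu) um.
have [m'd mm'] : opp G m \in darts G /\ matched G (opp G m).
  by rewrite opp_in // matched_opp.
have [n1 n2] := matched_rot m'd mm'.
(* [link_prev] goes first: the pattern of [link_next] also matches [rot (rot m)]. *)
by case: um => ->; rewrite ?link_prev ?link_next //; case: ifP => _;
  rewrite inE ?n1 ?n2 ?rot_in ?vtx_rot //.
Qed.

Lemma link_nmdarts S u : u \in nmdarts G -> link G S u \in nmdarts G.
Proof.
move=> un; have /nmdartsP[ud nu] := un; have [m [md mm um]] := unmatched_rot ud nu.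
have ev : vtx G u = vtx G m by case: um => ->; rewrite !vtx_rot.
exact: proj1 (link_at S md mm un ev).
Qed.

Lemma linkK S u : S \in states G -> u \in nmdarts G -> link G S (link G S u) = u.
Proof.
move=> St /nmdartsP[ud nu]; have [m [md mm um]] := unmatched_rot ud nu.
have [m'd mm'] : opp G m \in darts G /\ matched G (opp G m).
  by rewrite opp_in // matched_opp.
have m'S : (opp G m \in S) = (m \in S) by rewrite state_opp.
by case: um => ->; rewrite ?link_prev ?link_next //; case: ifP => mS;
  rewrite ?link_prev ?link_next // m'S mS oppK.
Qed.

(** * The bigon configuration *)

Section Bigon.
Variables hx hq : H.
Hypothesis cfg : bigon_config G hx hq.

Local Notation hp := (opp G hx).
Local Notation hy := (opp G hq).
Local Notation G' := (replace_bigon G hx hq).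

Lemma hx_dart : hx \in darts G. Proof. by case: cfg => -[]. Qed.
Lemma hq_dart : hq \in darts G. Proof. by case: cfg => -[]. Qed.
Lemma hp_dart : hp \in darts G. Proof. exact: opp_in hx_dart. Qed.
Lemma hy_dart : hy \in darts G. Proof. exact: opp_in hq_dart. Qed.
#[local] Hint Resolve hx_dart hq_dart hp_dart hy_dart : core.

Lemma hx_matched : matched G hx. Proof. by case: cfg => -[]. Qed.
Lemma hq_matched : matched G hq. Proof. by case: cfg => -[]. Qed.
Lemma hp_matched : matched G hp. Proof. by rewrite matched_opp // hx_matched. Qed.
Lemma hy_matched : matched G hy. Proof. by rewrite matched_opp // hq_matched. Qed.
#[local] Hint Resolve hx_matched hq_matched hp_matched hy_matched : core.

Lemma config_unmatched :
  ((matched G (rot G hx) = false) * (matched G (rot G (rot G hx)) = false) *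
   (matched G (rot G hp) = false) * (matched G (rot G (rot G hp)) = false)) *
  ((matched G (rot G hq) = false) * (matched G (rot G (rot G hq)) = false) *
   (matched G (rot G hy) = false) * (matched G (rot G (rot G hy)) = false)).
Proof.
have [/negbTE ? /negbTE ?] := matched_rot hx_dart hx_matched.
have [/negbTE ? /negbTE ?] := matched_rot hp_dart hp_matched.
have [/negbTE ? /negbTE ?] := matched_rot hq_dart hq_matched.
by have [/negbTE ? /negbTE ?] := matched_rot hy_dart hy_matched.
Qed.

Lemma config_opp :
  (opp G hp = hx) * (opp G hy = hq) *
  ((opp G (rot G hp) = rot G (rot G hq)) * (opp G (rot G (rot G hp)) = rot G hq) *
   (opp G (rot G hq) = rot G (rot G hp)) * (opp G (rot G (rot G hq)) = rot G hp)).
Proof.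
have [_ [_ e2 e1]] := cfg.
do !split; rewrite ?oppK //; first by rewrite -e2 oppK.
by rewrite -e1 oppK.
Qed.

Lemma config_vtx_neq :
  ((vtx G hx == vtx G hp) = false) * ((vtx G hx == vtx G hq) = false) *
  ((vtx G hx == vtx G hy) = false) * ((vtx G hp == vtx G hq) = false) *
  ((vtx G hp == vtx G hy) = false) * ((vtx G hq == vtx G hy) = false) *
  ((vtx G hp == vtx G hx) = false) * ((vtx G hq == vtx G hx) = false) *
  ((vtx G hy == vtx G hx) = false) * ((vtx G hq == vtx G hp) = false) *
  ((vtx G hy == vtx G hp) = false) * ((vtx G hy == vtx G hq) = false).
Proof.
have [_ [+ _ _]] := cfg; rewrite /= !inE !negb_or.
case/and4P => /and3P[xp xq xy] /andP[pq py] qy _.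
by do !split; apply/negbTE; rewrite // eq_sym.
Qed.

Lemma config_neq :
  ((hx == hp) = false) * ((hx == hq) = false) * ((hx == hy) = false) *
  ((hp == hq) = false) * ((hp == hy) = false) * ((hq == hy) = false) *
  ((hp == hx) = false) * ((hq == hx) = false) * ((hy == hx) = false) *
  ((hq == hp) = false) * ((hy == hp) = false) * ((hy == hq) = false).
Proof.
by do !split; apply/negbTE/eqP => /(congr1 (vtx G))/eqP; rewrite config_vtx_neq.
Qed.

Lemma darts_replace h :
  (h \in darts G') = (h \in darts G) && (vtx G h \notin [:: vtx G hp; vtx G hq]).
Proof.
rewrite /= !inE andbC; case hd: (h \in darts G) => //=.
by rewrite !vtx_eqE // -!orbA.
Qed.

Lemma opp_replace h :
  opp G' h = if h == hx then hy else if h == hy then hx else opp G h.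
Proof. by []. Qed.

Lemma opp_mem_config h : h \in darts G ->
  (opp G h \in [:: hx; hp; hq; hy]) = (h \in [:: hx; hp; hq; hy]).
Proof.
move=> hd; rewrite !inE !opp_eq // !config_opp.
by case: (h == hx); case: (h == hp); case: (h == hq); case: (h == hy); rewrite ?orbT.
Qed.

Definition state_contract (S : {set H}) : {set H} :=
  [set h | (h \in S) && (h \notin [:: hx; hp; hq; hy])
           || ((hx \in S) (+) (hq \in S)) && (h \in [:: hx; hy])].

Definition state_expand (b : bool) (S : {set H}) : {set H} :=
  [set h | [|| (h \in S) && (h \notin [:: hx; hy]), b && (h \in [:: hx; hp])
             | (b (+) (hx \in S)) && (h \in [:: hq; hy])]].

Lemma state_contract_state S : S \in states G -> state_contract S \in states G'.
Proof.
move=> St; have /statesP[sub cl] := St.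
apply/statesP; split=> h; rewrite [h \in _]inE => /orP[/andP[hS nb]|/andP[t hb]].
- have /andP[hd mh] := sub h hS; rewrite darts_replace hd mh andbT /=.
  apply: contra nb; rewrite !inE => /orP[]/eqP ev.
    by rewrite (matched_unique hp_dart hd) ?eqxx ?orbT.
  by rewrite (matched_unique hq_dart hd) ?eqxx ?orbT.
- by rewrite darts_replace; move: hb; rewrite !inE => /orP[]/eqP->;
    rewrite ?hx_matched ?hy_matched ?config_vtx_neq /= !andbT.
- have [nx ny] : (h == hx) = false /\ (h == hy) = false.
    by move: nb; rewrite !inE => /norP[/negbTE-> /norP[_ /norP[_ /negbTE->]]].
  have /andP[hd _] := sub h hS.
  by rewrite opp_replace nx ny inE cl //= opp_mem_config // nb.
- by move: hb; rewrite !inE => /orP[]/eqP->;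
    rewrite opp_replace ?config_neq /= ?eqxx ?config_neq t ?orbT.
Qed.

Lemma state_expand_state b S : S \in states G' -> state_expand b S \in states G.
Proof.
move=> St; have /statesP[sub cl] := St.
have [hpS hqS] : (hp \in S) = false /\ (hq \in S) = false.
  by split; apply/negP => /sub; rewrite darts_replace !inE eqxx ?orbT andbF.
apply/statesP; split=> h; rewrite [h \in _]inE.
- case/or3P=> [/andP[/sub] | /andP[_] | /andP[_]].
  + by rewrite darts_replace => /andP[/andP[-> _] ->].
  + by rewrite !inE => /orP[]/eqP->; apply/andP.
  + by rewrite !inE => /orP[]/eqP->; apply/andP.
- case/or3P=> [/andP[hS nb] | /andP[bT] | /andP[cT]].
  + have [nx ny] : (h == hx) = false /\ (h == hy) = false.
      by move: nb; rewrite !inE => /norP[/negbTE-> /negbTE->].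
    have /andP[] := sub h hS; rewrite darts_replace => /andP[hd _] _.
    have := cl h hS; rewrite opp_replace nx ny => ohS.
    rewrite inE ohS !inE !opp_eq // !config_opp.
    by case: eqP hS => [->|_]; rewrite ?hpS //; case: eqP => [->|]; rewrite ?hqS.
  + by rewrite !inE => /orP[]/eqP->; rewrite ?config_opp bT eqxx ?orbT.
  + by rewrite !inE => /orP[]/eqP->; rewrite ?config_opp cT eqxx ?orbT.
Qed.

Lemma state_expandK S : S \in states G -> state_expand (hx \in S) (state_contract S) = S.
Proof.
move=> St; have hpS := state_opp St hx_dart; have hyS := state_opp St hq_dart.
apply/setP => h; have [hb|] := boolP (h \in [:: hx; hp; hq; hy]); rewrite !inE.
  move: hb; rewrite !inE => /or4P[]/eqP->; rewrite ?eqxx ?config_neq /= ?hpS ?hyS;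
  by case: (hx \in S); case: (hq \in S).
by case/norP=> /negbTE-> /norP[/negbTE-> /norP[/negbTE-> /negbTE->]];
  rewrite /= ?andbT ?andbF ?orbF.
Qed.

Lemma state_contractK b S : S \in states G' ->
  state_contract (state_expand b S) = S /\ (hx \in state_expand b S) = b.
Proof.
move=> St; have /statesP[sub cl] := St.
have [hpS hqS] : (hp \in S) = false /\ (hq \in S) = false.
  by split; apply/negP => /sub; rewrite darts_replace !inE eqxx ?orbT andbF.
have hyS : (hy \in S) = (hx \in S).
  by apply/idP/idP => /cl; rewrite opp_replace ?eqxx ?config_neq.
split; last by rewrite !inE eqxx !config_neq /= ?andbT !andbF /= orbF.
apply/setP => h; have [hb|] := boolP (h \in [:: hx; hp; hq; hy]); rewrite !inE.
  move: hb; rewrite !inE => /or4P[]/eqP->; rewrite ?eqxx ?config_neq /= ?hpS ?hqS ?hyS;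
  by case: b; case: (hx \in S).
by case/norP=> /negbTE-> /norP[/negbTE-> /norP[/negbTE-> /negbTE->]];
  rewrite /= ?andbT ?andbF ?orbF.
Qed.

Lemma state_contract_parity S : S \in states G ->
  odd (#|state_contract S| %/ 2) = odd (#|S| %/ 2).
Proof.
move=> St; have hpS := state_opp St hx_dart; have hyS := state_opp St hq_dart.
set B := [set x in [:: hx; hp; hq; hy]].
have uB : uniq [:: hx; hp; hq; hy] by rewrite /= !inE !config_neq.
have outB : state_contract S :\: B = S :\: B.
  apply/setP => h; rewrite !inE.
  by case: (h == hx); case: (h == hp); case: (h == hq); case: (h == hy);
    rewrite /= ?andbT ?andbF ?orbF.
have cS : count (mem S) [:: hx; hp; hq; hy] = ((hx \in S) + (hq \in S)) * 2.
  by rewrite /= hpS hyS; case: (hx \in S); case: (hq \in S).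
have cS' : count (mem (state_contract S)) [:: hx; hp; hq; hy] =
           ((hx \in S) (+) (hq \in S)) * 2.
  by rewrite /= !inE !eqxx !config_neq /= !andbF; case: (hx \in S); case: (hq \in S).
rewrite -(cardsID B S) -(cardsID B (state_contract S)) outB !card_setI_seq // cS cS'.
by rewrite !divnMDl // !oddD; case: (hx \in S); case: (hq \in S).
Qed.

Lemma link_next_replace S m : m \in darts G -> matched G m ->
  link G' S (rot G m) = if m \in S then rot G (opp G' m) else rot G (rot G (opp G' m)).
Proof.
by move=> md mm; apply: (@link_rot G'); [case: (matched_rot md mm) | rewrite /= rot3].
Qed.

Lemma link_prev_replace S m : m \in darts G -> matched G m ->
  link G' S (rot G (rot G m)) =
  if m \in S then rot G (rot G (opp G' m)) else rot G (opp G' m).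
Proof. by move=> md mm; apply: (@link_rot2 G') => //=; rewrite rot3. Qed.

Lemma opp_replace_unmatched u : ~~ matched G u -> opp G' u = opp G u.
Proof.
move=> nu; rewrite opp_replace.
by case: eqP nu => [->|_]; rewrite ?hx_matched //; case: eqP => [->|]; rewrite ?hy_matched.
Qed.

(** * Curves *)

Definition bigon_ends : {set H} :=
  [set u in nmdarts G | (vtx G u == vtx G hp) || (vtx G u == vtx G hq)].

Definition outer_ends : {set H} :=
  [set u in nmdarts G | (vtx G u == vtx G hx) || (vtx G u == vtx G hy)].

Lemma nmdarts_replace u :
  (u \in nmdarts G') = (u \in nmdarts G) && (u \notin bigon_ends).
Proof.
rewrite [u \in nmdarts G']inE darts_replace !inE /=.
by case: (u \in darts G); case: (matched G u); case: (vtx G u == vtx G hp);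
  case: (vtx G u == vtx G hq).
Qed.

Lemma outer_notin_bigon u : u \in outer_ends -> (u \in bigon_ends) = false.
Proof.
by rewrite !inE => /andP[-> /orP[]/eqP->]; rewrite !config_vtx_neq.
Qed.

Lemma outer_nmdarts_replace u : u \in outer_ends -> u \in nmdarts G'.
Proof.
move=> uo; rewrite nmdarts_replace outer_notin_bigon // andbT.
by move: uo; rewrite inE => /andP[].
Qed.

Lemma bigon_ends_cases u : u \in bigon_ends ->
  [\/ u = rot G hp, u = rot G (rot G hp), u = rot G hq | u = rot G (rot G hq)].
Proof.
rewrite !inE => /andP[/andP[ud nu] /orP[]/eqP ev].
  by case: (unmatched_at_vertex hp_dart ud hp_matched nu ev) => ->; [constructor 1 | constructor 2].
by case: (unmatched_at_vertex hq_dart ud hq_matched nu ev) => ->; [constructor 3 | constructor 4].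
Qed.

Lemma outer_ends_cases u : u \in outer_ends ->
  [\/ u = rot G hx, u = rot G (rot G hx), u = rot G hy | u = rot G (rot G hy)].
Proof.
rewrite !inE => /andP[/andP[ud nu] /orP[]/eqP ev].
  by case: (unmatched_at_vertex hx_dart ud hx_matched nu ev) => ->; [constructor 1 | constructor 2].
by case: (unmatched_at_vertex hy_dart ud hy_matched nu ev) => ->; [constructor 3 | constructor 4].
Qed.

Lemma link_bigon S u : u \in bigon_ends -> link G S u \in outer_ends.
Proof.
move=> ub; rewrite inE in ub; case/andP: ub => un /orP[]/eqP ev.
  have [ln lv] := link_at S hp_dart hp_matched un ev.
  by rewrite inE ln lv config_opp eqxx.
have [ln lv] := link_at S hq_dart hq_matched un ev.
by rewrite inE ln lv eqxx orbT.
Qed.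

Lemma link_outer S u : u \in outer_ends -> link G S u \in bigon_ends.
Proof.
move=> ub; rewrite inE in ub; case/andP: ub => un /orP[]/eqP ev.
  have [ln lv] := link_at S hx_dart hx_matched un ev.
  by rewrite inE ln lv eqxx.
have [ln lv] := link_at S hy_dart hy_matched un ev.
by rewrite inE ln lv config_opp eqxx orbT.
Qed.

Lemma opp_bigon u : u \in bigon_ends -> opp G u \in bigon_ends.
Proof.
by case/bigon_ends_cases => ->;
  rewrite config_opp !inE ?config_unmatched !vtx_rot // eqxx ?orbT /= ?andbT.
Qed.

Lemma link_outer_replace S u : S \in states G -> u \in outer_ends ->
  link G' (state_contract S) u = link G S (opp G (link G S u)).
Proof.
move=> St; have hpS := state_opp St hx_dart; have hyS := state_opp St hq_dart.
have [cx cy] : (hx \in state_contract S) = (hx \in S) (+) (hq \in S) /\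
               (hy \in state_contract S) = (hx \in S) (+) (hq \in S).
  by rewrite !inE !eqxx !config_neq /= !andbF /= andbT.
case/outer_ends_cases => ->;
  rewrite ?link_prev_replace ?link_next_replace ?link_prev ?link_next //
          ?cx ?cy opp_replace ?eqxx ?config_neq /=;
  case sx: (hx \in S); case sq: (hq \in S);
  by do 3![rewrite /= ?config_opp ?link_prev ?link_next // ?hpS ?hyS ?sx ?sq].
Qed.

Lemma link_replace S u : u \in nmdarts G' -> u \notin outer_ends ->
  link G' (state_contract S) u = link G S u.
Proof.
rewrite nmdarts_replace => /andP[un nb] no.
have /nmdartsP[ud nu] := un; have [m [md mm um]] := unmatched_rot ud nu.
have ev : vtx G u = vtx G m by case: um => ->; rewrite !vtx_rot.
have mb : m \notin [:: hx; hp; hq; hy].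
  rewrite inE un /= ev in nb; rewrite inE un /= ev in no.
  case/norP: nb => np nq; case/norP: no => nx ny.
  by rewrite !inE; apply/negP => /or4P[]/eqP mE; move: np nq nx ny; rewrite mE eqxx.
have [mx my] : (m == hx) = false /\ (m == hy) = false.
  by move: mb; rewrite !inE => /norP[/negbTE-> /norP[_ /norP[_ /negbTE->]]].
have mS : (m \in state_contract S) = (m \in S).
  by rewrite inE mb andbT !inE mx my andbF orbF.
by case: um => ->; rewrite ?link_prev_replace ?link_next_replace ?link_prev ?link_next //
  mS opp_replace mx my.
Qed.

Definition retract_end (S : {set H}) u := if u \in bigon_ends then link G S u else u.

Lemma curve_step_retract S u v : S \in states G -> curve_rel G S u v ->
  connect (curve_rel G' (state_contract S)) (retract_end S u) (retract_end S v).
Proof.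
move=> St; set e' := curve_rel G' _; have sym_e' := sym_connect_sym (curve_sym G' (state_contract S)).
have step a b : a \in nmdarts G -> b \in nmdarts G -> b = opp G a \/ b = link G S a ->
    connect e' (retract_end S a) (retract_end S b).
  move=> an bn; rewrite /retract_end; case ab: (a \in bigon_ends) => -[->|->].
  - rewrite opp_bigon //; apply: connect1; apply/and3P; split.
    + exact/outer_nmdarts_replace/link_bigon.
    + exact/outer_nmdarts_replace/link_bigon/opp_bigon.
    + by rewrite link_outer_replace ?link_bigon // linkK // eqxx !orbT.
  - rewrite outer_notin_bigon ?link_bigon //.
  - have /nmdartsP[ad na] := an.
    have ob : (opp G a \in bigon_ends) = false.
      by apply: contraFF ab => /opp_bigon; rewrite oppK.
    rewrite ob; apply: connect1; apply/and3P; split.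
    + by rewrite nmdarts_replace an ab.
    + by rewrite nmdarts_replace opp_nmdarts ?ob.
    + by rewrite opp_replace_unmatched // eqxx.
  - case ao: (a \in outer_ends); first by rewrite link_outer // linkK.
    have lb : (link G S a \in bigon_ends) = false.
      by apply: contraFF ao => /(link_bigon S); rewrite linkK.
    rewrite lb; apply: connect1; apply/and3P; split.
    + by rewrite nmdarts_replace an ab.
    + by rewrite nmdarts_replace link_nmdarts ?lb.
    + by rewrite link_replace ?nmdarts_replace ?an ?ab ?ao // eqxx !orbT.
case/and3P=> un vn /or4P[]/eqP E.
- by apply: step => //; left.
- by rewrite sym_e'; apply: step => //; left.
- by apply: step => //; right.
- by rewrite sym_e'; apply: step => //; right.
Qed.

Lemma curve_step_replace S u v : S \in states G ->
  curve_rel G' (state_contract S) u v -> connect (curve_rel G S) u v.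
Proof.
move=> St; set e := curve_rel G S; have sym_e := sym_connect_sym (curve_sym G S).
have edge a b : a \in nmdarts G -> b \in nmdarts G ->
    [|| b == opp G a, a == opp G b, b == link G S a | a == link G S b] -> connect e a b.
  by move=> an bn ab; apply: connect1; apply/and3P.
have step a b : b = opp G' a \/ b = link G' (state_contract S) a ->
    a \in nmdarts G' -> b \in nmdarts G' -> connect e a b.
  move=> E an'; rewrite nmdarts_replace => /andP[bn _].
  have /andP[an _] : (a \in nmdarts G) && (a \notin bigon_ends) by rewrite -nmdarts_replace.
  have /nmdartsP[_ na] := an.
  case: E => ->{b} in bn *.
    by rewrite opp_replace_unmatched // in bn *; rewrite edge ?eqxx.
  case ao: (a \in outer_ends); last by rewrite link_replace ?ao // in bn *; rewrite edge ?eqxx ?orbT.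
  rewrite link_outer_replace // in bn *.
  have ln := link_nmdarts S an; have oln := opp_nmdarts ln.
  apply: connect_trans (edge _ _ an ln _) _; first by rewrite eqxx !orbT.
  apply: connect_trans (edge _ _ ln oln _) _; first by rewrite eqxx.
  by rewrite edge ?eqxx ?orbT.
case/and3P=> un vn /or4P[]/eqP E.
- by apply: step => //; left.
- by rewrite sym_e; apply: step => //; left.
- by apply: step => //; right.
- by rewrite sym_e; apply: step => //; right.
Qed.

Lemma ncurves_contract S : S \in states G -> ncurves G' (state_contract S) = ncurves G S.
Proof.
move=> St; rewrite /ncurves; congr addn; symmetry.
apply: (n_comp_retract (pi := retract_end S)).
- exact: sym_connect_sym (curve_sym G S).
- exact: sym_connect_sym (curve_sym G' _).
- by move=> a b /and3P[-> ->].
- by move=> a b /and3P[-> ->].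
- by move=> a; rewrite nmdarts_replace => /andP[].
- by move=> a b; apply: curve_step_replace.
- by move=> a b; apply: curve_step_retract.
- by move=> a; rewrite nmdarts_replace /retract_end => /andP[_ /negbTE->].
move=> a an; rewrite /retract_end; case ab: (a \in bigon_ends); last first.
  by rewrite nmdarts_replace an ab.
split; first exact/outer_nmdarts_replace/link_bigon.
by apply: connect1; rewrite /curve_rel an link_nmdarts // eqxx !orbT.
Qed.

Lemma bracket2_replace_bigon (R : fieldType) :
  bracket2 G (1 : R) = (2 * bracket2 G' 1)%R.
Proof.
rewrite /bracket2 (big_bool_fibers _ _ (B := states G') (f := state_contract)
                    (c := fun S => hx \in S) (g := state_expand)); first last.
- by move=> S' St' k; have [-> ->] := state_contractK k St'; rewrite state_expand_state.
- by move=> S St; rewrite state_contract_state ?state_expandK.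
rewrite mulr_sumr; apply: eq_bigr => S' St'; rewrite mulr_natl mulr2n.
have term k : ((- 1 : R) ^+ (#|state_expand k S'| %/ 2) *
                (1 + 1^-1) ^+ ncurves G (state_expand k S') =
               (- 1) ^+ (#|S'| %/ 2) * (1 + 1^-1) ^+ ncurves G' S')%R.
  have Sk := state_expand_state k St'; have [K _] := state_contractK k St'.
  by rewrite -[in RHS]K ncurves_contract // -signr_odd state_contract_parity // signr_odd.
by rewrite !term.
Qed.

(** * 2-factors *)

Definition tf_contract (F : {set H}) : {set H} :=
  [set h in F | vtx G h \notin [:: vtx G hp; vtx G hq]].

Definition tf_expand (b : bool) (F : {set H}) : {set H} :=
  [set h | [|| h \in F, h \in [:: hp; hq]
             | h \in if b then [:: rot G hp; rot G (rot G hq)]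
                          else [:: rot G (rot G hp); rot G hq]]].

Lemma opp_at_pq h : h \in darts G -> vtx G (opp G h) \in [:: vtx G hp; vtx G hq] ->
  [|| h == hx, h == hy | vtx G h \in [:: vtx G hp; vtx G hq]].
Proof.
move=> hd; rewrite !inE !vtx_eqE ?opp_in // !opp_eq // !config_opp.
by case/orP=> /or3P[]/eqP->; rewrite ?eqxx ?vtx_rot // ?orbT.
Qed.

Lemma twofactor_bigon F : F \in twofactors G ->
  ((hp \in F) = true) * ((hq \in F) = true) *
  (((rot G (rot G hp) \in F) = ~~ (rot G hp \in F)) *
   ((rot G (rot G hq) \in F) = (rot G hp \in F)) *
   ((rot G hq \in F) = ~~ (rot G hp \in F))).
Proof.
case/twofactorsP=> sub cl mF deg.
have [pF qF] : hp \in F /\ hq \in F by split; apply: mF.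
have p2 : (rot G (rot G hp) \in F) = ~~ (rot G hp \in F).
  have := deg _ hp_dart; rewrite card_at_vertex //= pF.
  by case: (rot G hp \in F); case: (rot G (rot G hp) \in F).
have q1 : (rot G (rot G hq) \in F) = (rot G hp \in F).
  by apply/idP/idP => /cl; rewrite config_opp.
have q2 : (rot G hq \in F) = (rot G (rot G hp) \in F).
  by apply/idP/idP => /cl; rewrite config_opp.
by do !split; rewrite ?q2.
Qed.

Lemma tf_expand_pq b F h : h \in tf_expand b F -> h \notin F ->
  vtx G h \in [:: vtx G hp; vtx G hq].
Proof.
rewrite inE => /or3P[-> // | | ]; last case: b; rewrite !inE => /orP[]/eqP-> _;
  by rewrite ?vtx_rot // eqxx ?orbT.
Qed.

Lemma tf_expand_bigon b F : F \in twofactors G' ->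
  let X := tf_expand b F in
  ((hp \in X) = true) * ((hq \in X) = true) *
  (((rot G hp \in X) = b) * ((rot G (rot G hp) \in X) = ~~ b) *
   ((rot G hq \in X) = ~~ b) * ((rot G (rot G hq) \in X) = b)).
Proof.
case/twofactorsP=> sub _ _ _ /=.
have nF : ((rot G hp \in F) = false) * ((rot G (rot G hp) \in F) = false) *
          ((rot G hq \in F) = false) * ((rot G (rot G hq) \in F) = false).
  by do !split; apply/negP => /sub; rewrite darts_replace !inE ?vtx_rot // eqxx ?orbT andbF.
by case: b; rewrite /= !inE !nF /= !dart_eqE // ?rot3 // !vtx_rot //
  ?config_unmatched ?hp_matched ?hq_matched ?config_vtx_neq ?eqxx /= ?orbT.
Qed.

Lemma tf_contract_tf F : F \in twofactors G -> tf_contract F \in twofactors G'.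
Proof.
case/twofactorsP=> sub cl mF deg; apply/twofactorsP; split.
- by move=> h; rewrite inE darts_replace => /andP[/sub -> ->].
- move=> h; rewrite inE => /andP[hF hv]; have hd := sub h hF.
  rewrite opp_replace; case: eqP => [_|/eqP nx].
    by rewrite inE mF // !inE !config_vtx_neq.
  case: eqP => [_|/eqP ny]; first by rewrite inE mF // !inE !config_vtx_neq.
  rewrite inE cl //=; apply/negP => /(opp_at_pq hd).
  by rewrite (negbTE nx) (negbTE ny) (negbTE hv).
- by move=> h; rewrite darts_replace => /andP[hd hv] mh; rewrite inE mF ?hv.
move=> h; rewrite darts_replace => /andP[hd hv]; rewrite -(deg h hd).
apply: eq_card => h'; rewrite !in_set -andbA; case: eqP => [->|]; rewrite ?hv ?andbF //.
Qed.

Lemma tf_expand_tf b F : F \in twofactors G' -> tf_expand b F \in twofactors G.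
Proof.
move=> Ft; have /= XB := tf_expand_bigon b Ft; case/twofactorsP: (Ft) => sub cl mF deg.
have FX : {subset F <= tf_expand b F} by move=> h hF; rewrite inE hF.
have subF h : h \in F -> h \in darts G by move/sub; rewrite darts_replace => /andP[].
have [xF yF] : hx \in F /\ hy \in F.
  by split; apply: mF => //; rewrite darts_replace ?hx_dart ?hy_dart !inE !config_vtx_neq.
have subX : {subset tf_expand b F <= darts G}.
  move=> h; rewrite inE => /or3P[/subF // | | ]; last case: b {XB FX};
    by rewrite !inE => /orP[]/eqP->.
apply/twofactorsP; split=> //.
- move=> h hX; case hF: (h \in F).
    have := cl h hF; rewrite opp_replace.
    case: eqP => [-> _|_]; first by rewrite XB.
    by case: eqP => [-> _|_ /FX //]; rewrite config_opp XB.
  rewrite inE hF /= in hX; case: b XB FX {subX} hX => XB FX hX; rewrite !inE in hX;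
    by case/orP: hX => /orP[]/eqP->; rewrite ?config_opp ?XB ?FX.
- move=> h hd mh; case hv: (vtx G h \in [:: vtx G hp; vtx G hq]).
    rewrite !inE in hv; case/orP: hv => /eqP ev.
      by rewrite (matched_unique hp_dart hd) ?XB.
    by rewrite (matched_unique hq_dart hd) ?XB.
  by apply/FX/mF; rewrite // darts_replace hd hv.
move=> h hd; case hv: (vtx G h \in [:: vtx G hp; vtx G hq]).
  rewrite !inE in hv; case/orP: hv => /eqP->;
    by rewrite card_at_vertex //= !XB; case: (b).
rewrite -(deg h) ?darts_replace ?hd ?hv //; apply: eq_card => h'.
rewrite [in LHS]in_set [in RHS]in_set /=; case: eqP => [ev|]; rewrite ?andbF ?andbT //.
apply/idP/idP => [hX|/FX //]; case h'F: (h' \in F) => //.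
by move: (tf_expand_pq hX (negbT h'F)); rewrite ev hv.
Qed.

Lemma tf_expandK F : F \in twofactors G ->
  tf_expand (rot G hp \in F) (tf_contract F) = F.
Proof.
move=> Ft; have Ft' := tf_contract_tf Ft; have FB := twofactor_bigon Ft.
have /= XB := tf_expand_bigon (rot G hp \in F) Ft'.
have /twofactorsP[subX _ _ _] := tf_expand_tf (rot G hp \in F) Ft'.
have /twofactorsP[sub _ _ _] := Ft.
apply/setP => h; case hv: (vtx G h \in [:: vtx G hp; vtx G hq]); last first.
  apply/idP/idP => [hX|hF]; last by rewrite inE inE hF hv.
  case: (boolP (h \in tf_contract F)) => [|hF']; first by rewrite inE => /andP[].
  by move: (tf_expand_pq hX hF'); rewrite hv.
case hd: (h \in darts G); last by rewrite (contraFF (@subX h)) ?(contraFF (@sub h)).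
rewrite !inE in hv; case/orP: hv; rewrite vtx_eqE // => /or3P[]/eqP->;
  by rewrite XB ?FB.
Qed.

Lemma tf_contractK b F : F \in twofactors G' ->
  tf_contract (tf_expand b F) = F /\ (rot G hp \in tf_expand b F) = b.
Proof.
move=> Ft; split; last by rewrite (tf_expand_bigon b Ft).
have /twofactorsP[sub _ _ _] := Ft.
apply/setP => h; rewrite [h \in tf_contract _]inE; case hF: (h \in F).
  by have := sub h hF; rewrite darts_replace => /andP[_ ->]; rewrite inE hF.
by apply/negbTE/andP => -[hX]; rewrite (tf_expand_pq hX) ?hF.
Qed.

Lemma n2f_replace_bigon : n2f G = (2 * n2f G')%N.
Proof.
rewrite /n2f -!sum1_card (big_bool_fibers _ _ (B := twofactors G') (f := tf_contract)
                    (c := fun F => rot G hp \in F) (g := tf_expand)); first last.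
- by move=> F' Ft' k; have [-> ->] := tf_contractK k Ft'; rewrite tf_expand_tf.
- by move=> F Ft; rewrite tf_contract_tf ?tf_expandK.
by rewrite big_distrr; apply: eq_bigr.
Qed.

End Bigon.
End Wellformed.
End Drawings.

Theorem lemma2p4 :
  (forall (H V : finType) (G : pmd H V) (hx hq : H),
     pmd_wf G -> bigon_config G hx hq ->
     bracket2 G (1 : rat) = (2 * bracket2 (replace_bigon G hx hq) (1 : rat))%R)
  /\
  (forall (H V : finType) (G : pmd H V) (hx hq : H),
     pmd_wf G -> loops G = 0%N -> plane G -> bigon_config G hx hq ->
     n2f G = (2 * n2f (replace_bigon G hx hq))%N).
Proof.
split=> H V G hx hq wf; first by move=> cfg; apply: bracket2_replace_bigon.
by move=> _ _; apply: n2f_replace_bigon.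
Qed.
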